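(* Let $K$ be a field and regard $K[x_1,\dots,x_n]$ as $(K[x_1])[\tilde{\bm{x}}]$ with $\tilde{\bm{x}}=(x_2,\dots,x_n)$ and a fixed monomial ordering $\succ$ on monomials in $\tilde{\bm{x}}$. Let $F=\{f_1,\dots,f_s\}\subset(K[x_1])[\tilde{\bm{x}}]\setminus K[x_1]$ with $\operatorname{lm}(f_j)=\tilde{\bm{x}}^\alpha$ for all $1\le j\le s$. If $f:=\sum_{j=1}^s f_j$ satisfies $\operatorname{lm}(f)\prec\tilde{\bm{x}}^\alpha$, then there exist $b,b_1,\dots,b_{s-1}\in K[x_1]\setminus\{0\}$ such that $$b f=\sum_{1\le j<s}b_jS(f_j,f_s).$$ Moreover, for each irreducible polynomial $p\in K[x_1]\setminus K$, the elements of $F$ can be relabeled so that the multiplier $b$ in such a representation is not divisible by $p$.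
   Context: For nonzero $f=\sum c_\alpha\tilde{\bm{x}}^\alpha$ with $c_\alpha\in K[x_1]$, $\operatorname{lm}(f)$ is the $\succ$-largest monomial with nonzero coefficient, $\operatorname{lc}(f)$ its coefficient, $\operatorname{lt}(f)=\operatorname{lc}(f)\operatorname{lm}(f)$. For $a,b\in K[x_1]\setminus\{0\}$, $\gcd$ is monic and $\operatorname{lcm}(a,b)=ab/\gcd(a,b)$. For $f,g\in(K[x_1])[\tilde{\bm{x}}]\setminus K[x_1]$, $S(f,g):=\frac{m\tilde{\bm{x}}^\gamma}{\operatorname{lt}(f)}f-\frac{m\tilde{\bm{x}}^\gamma}{\operatorname{lt}(g)}g$ with $m=\operatorname{lcm}(\operatorname{lc}f,\operatorname{lc}g)$ and $\tilde{\bm{x}}^\gamma=\operatorname{lcm}(\operatorname{lm}f,\operatorname{lm}g)$. *)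

From mathcomp Require Import all_boot all_order all_algebra.
From mathcomp Require Import multinomials.mpoly.
Set Implicit Arguments. Unset Strict Implicit. Unset Printing Implicit Defensive.
Import GRing.Theory.
Local Open Scope ring_scope.

(* Polynomials in K[x_1,...,x_n] viewed as (K[x_1])[x~], x~ = (x_2,...,x_n):
   the type {mpoly {poly K}[m]} with m = n - 1 variables x~. *)

Section Groebner.
Variable K : fieldType.
Variable m : nat.
Local Notation P := {mpoly {poly K}[m]}.
Local Notation M := 'X_{1..m}.

Definition monomial_order (r : rel M) : Prop :=
  [/\ reflexive r, antisymmetric r, transitive r & total r] /\
  (forall a b c : M, r a b -> r (a + c)%MM (b + c)%MM) /\
  well_founded (fun a b : M => r a b && (a != b)).

Variable r : rel M.

Definition mlt (a b : M) : bool := r a b && (a != b).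

Definition lm (f : P) : M :=
  foldl (fun a b => if r a b then b else a) 0%MM (msupp f).

Definition lc (f : P) : {poly K} := f@_(lm f).

Definition gcdm (a b : {poly K}) : {poly K} :=
  (lead_coef (gcdp a b))^-1 *: gcdp a b.
Definition lcmm (a b : {poly K}) : {poly K} := (a * b) %/ gcdm a b.

Definition spoly (f g : P) : P :=
  let mm := lcmm (lc f) (lc g) in
  let gam := mlcm (lm f) (lm g) in
  ((mm %/ lc f) *: 'X_[(gam - lm f)%MM]) * f
  - ((mm %/ lc g) *: 'X_[(gam - lm g)%MM]) * g.

Definition in_Kx1 (f : P) : bool := f == (f@_0%MM)%:MP.

End Groebner.

(* All f_j share the leading monomial x^alpha; write c_j for their leading
   coefficients and g_j := gcd(c_j, c_s).  Then
   S(f_j, f_s) = (c_s / g_j) f_j - (c_j / g_j) f_s, and lm(f) < x^alpha means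
   sum_j c_j = 0.  So for any b divisible by every d_j := c_s / g_j,
   sum_(j < s) (b / d_j) S(f_j, f_s)
     = b sum_(j < s) f_j - (b / c_s) (sum_(j < s) c_j) f_s = b f.
   If q divides every c_j, then b := c_s / q is such a multiple; q = 1 gives the
   first claim.  For an irreducible p, let p^e be the largest power of p dividing
   every c_j and move to the last position an f_k with p^(e+1) not dividing c_k:
   then b := c_k / p^e is not divisible by p. *)

From mathcomp Require Import all_boot all_order all_algebra all_fingroup.
From mathcomp Require Import multinomials.mpoly.
From mathcomp Require Import ring.
Import GRing.Theory.

Set Implicit Arguments.
Unset Strict Implicit.
Unset Printing Implicit Defensive.
Local Open Scope ring_scope.

Section MonomialOrder.
Variables (K : fieldType) (m : nat).
Local Notation P := {mpoly {poly K}[m]}.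
Local Notation M := 'X_{1..m}.
Variable r : rel M.
Hypothesis hr : monomial_order r.

Lemma morder_refl : reflexive r. Proof. by case: hr => [[]]. Qed.
Lemma morder_anti : antisymmetric r. Proof. by case: hr => [[]]. Qed.
Lemma morder_trans : transitive r. Proof. by case: hr => [[]]. Qed.
Lemma morder_total : total r. Proof. by case: hr => [[]]. Qed.

(* If a != 0 and a <= 0, then x > a + x > 2a + x > ... descends forever. *)
Lemma morder_ge0 (a : M) : r 0%MM a.
Proof.
have [_ [addr_mono wf]] := hr.
have [->|a_neq0] := eqVneq a 0%MM; first exact: morder_refl.
case/orP: (morder_total 0%MM a) => // le_a0; exfalso.
have descend (x : M) : r (a + x)%MM x && ((a + x)%MM != x).
  rewrite -{2 4}[x]add0m addr_mono //=.
  by apply: contra a_neq0 => /eqP/addIm ->.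
elim/(well_founded_ind wf): 0%MM => x IH.
exact: IH _ (descend x).
Qed.

Lemma foldl_max_spec (l : seq M) (a0 : M) :
  let mx := foldl (fun a b => if r a b then b else a) a0 l in
  [/\ mx \in a0 :: l, r a0 mx & forall x, x \in l -> r x mx].
Proof.
elim: l a0 => [|b l IH] a0 /=; first by rewrite inE eqxx morder_refl.
set a1 := if r a0 b then b else a0.
have [mx_in a1_le mx_ge] := IH a1.
have a0_le : r a0 a1 by rewrite /a1; case: ifP => // _; apply: morder_refl.
have b_le : r b a1.
  by rewrite /a1; case: ifP => [_|]; [apply: morder_refl | case/orP: (morder_total a0 b) => ->].
split.
- by move: mx_in; rewrite !inE /a1; case: ifP => _ /orP[->|->]; rewrite ?orbT.
- exact: morder_trans a0_le a1_le.
- move=> x; rewrite inE => /orP[/eqP -> | /mx_ge //].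
  exact: morder_trans b_le a1_le.
Qed.

Lemma lm_mem (f : P) : lm r f \in 0%MM :: msupp f.
Proof. by case: (foldl_max_spec (msupp f) 0%MM). Qed.

Lemma lm_ge (f : P) x : x \in msupp f -> r x (lm r f).
Proof. by case: (foldl_max_spec (msupp f) 0%MM) => _ _; apply. Qed.

Lemma lm_in_msupp (f : P) : ~~ in_Kx1 f -> lm r f \in msupp f.
Proof.
apply: contraR => lm_notin.
have lm0 : lm r f = 0%MM by move: (lm_mem f); rewrite inE (negbTE lm_notin) orbF => /eqP.
apply/eqP/mpolyP => x; rewrite mcoeffC.
have [->|x_neq0] := eqVneq x 0%MM; first by rewrite mulr1.
rewrite mulr0; apply/eqP; rewrite mcoeff_eq0; apply: contra x_neq0 => x_in.
by apply/eqP/morder_anti; rewrite morder_ge0 -lm0 lm_ge.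
Qed.

Lemma mcoeff_eq0_lm_lt (f : P) alpha :
  (f == 0) || mlt r (lm r f) alpha -> f@_alpha = 0.
Proof.
case/orP => [/eqP -> | /andP[lm_le lm_neq]]; first by rewrite mcoeff0.
apply/eqP; rewrite mcoeff_eq0; apply: contra lm_neq => alpha_in.
by apply/eqP/morder_anti; rewrite lm_le lm_ge.
Qed.

End MonomialOrder.

Section PolyDivisibility.
Variable K : fieldType.
Implicit Types a b c g p q : {poly K}.

Lemma gcdm_eqp a b : gcdm a b %= gcdp a b.
Proof.
rewrite /gcdm; have [->|g_neq0] := eqVneq (gcdp a b) 0; first by rewrite scaler0 eqpxx.
by rewrite eqp_scale // invr_eq0 lead_coef_eq0.
Qed.

Lemma dvdp_gcdml a b : gcdm a b %| a.
Proof. by rewrite (eqp_dvdl _ (gcdm_eqp a b)) dvdp_gcdl. Qed.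

Lemma dvdp_gcdmr a b : gcdm a b %| b.
Proof. by rewrite (eqp_dvdl _ (gcdm_eqp a b)) dvdp_gcdr. Qed.

Lemma dvdp_gcdm q a b : (q %| gcdm a b) = (q %| a) && (q %| b).
Proof. by rewrite (eqp_dvdr _ (gcdm_eqp a b)) dvdp_gcd. Qed.

Lemma lcmm_divl a b : a != 0 -> lcmm a b %/ a = b %/ gcdm a b.
Proof. by move=> a_neq0; rewrite /lcmm -divp_mulA ?dvdp_gcdmr // mulKp. Qed.

Lemma lcmm_divr a b : b != 0 -> lcmm a b %/ b = a %/ gcdm a b.
Proof. by move=> b_neq0; rewrite /lcmm mulrC -divp_mulA ?dvdp_gcdml // mulKp. Qed.

Lemma dvdp_divp2l c g q : q %| g -> g %| c -> c %/ g %| c %/ q.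
Proof. by move=> dvd_qg dvd_gc; rewrite -{2}(divpK dvd_gc) -divp_mulA ?dvdp_mulr. Qed.

Lemma divp_gcdm_cross b c c' :
  c' %/ gcdm c c' %| b -> b %/ (c' %/ gcdm c c') * (c %/ gcdm c c') * c' = b * c.
Proof.
move=> dvd_b; have Ec := divpK (dvdp_gcdml c c'); have Ec' := divpK (dvdp_gcdmr c c').
move: (divpK dvd_b) Ec Ec'.
set g := gcdm c c'; set d := c' %/ g; set a := c %/ g; set u := b %/ d.
by move=> <- <- <-; ring.
Qed.

Lemma dvdp_exp_size p c n :
  (1 < size p)%N -> c != 0 -> p ^+ n %| c -> (n < size c)%N.
Proof.
move=> p_gt1 c_neq0 /(dvdp_leq c_neq0); apply: leq_trans.
have p_neq0 : p != 0 by rewrite -size_poly_gt0 ltnW.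
have pn_gt0 : (0 < size (p ^+ n))%N by rewrite size_poly_gt0 expf_neq0.
by rewrite -(prednK pn_gt0) size_exp ltnS leq_pmull // ltn_predRL.
Qed.

Lemma exists_max_common_exp (I : finType) (c : I -> {poly K}) p i0 :
  (1 < size p)%N -> c i0 != 0 ->
  exists e k, (forall j, p ^+ e %| c j) /\ ~~ (p ^+ e.+1 %| c k).
Proof.
move=> p_gt1 ci0_neq0; pose common n := [forall j, p ^+ n %| c j].
have common0 : exists n, common n by exists 0%N; apply/forallP => j; rewrite expr0 dvd1p.
have common_bound n : common n -> (n <= size (c i0))%N.
  by move/forallP/(_ i0)/(dvdp_exp_size p_gt1 ci0_neq0)/ltnW.
case: (ex_maxnP common0 common_bound) => e /forallP dvd_e e_max.
have : ~~ common e.+1 by apply/negP => /e_max; rewrite ltnn.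
by rewrite negb_forall => /existsP[k ndvd_k]; exists e, k.
Qed.

End PolyDivisibility.

Section SPolynomial.
Variables (K : fieldType) (m : nat).
Local Notation P := {mpoly {poly K}[m]}.
Variable r : rel 'X_{1..m}.

Lemma spoly_same_lm (f g : P) alpha :
  lm r f = alpha -> lm r g = alpha -> f@_alpha != 0 -> g@_alpha != 0 ->
  spoly r f g = (g@_alpha %/ gcdm f@_alpha g@_alpha) *: f
              - (f@_alpha %/ gcdm f@_alpha g@_alpha) *: g.
Proof.
move=> lm_f lm_g f_neq0 g_neq0; rewrite /spoly /lc lm_f lm_g.
have -> : (mlcm alpha alpha - alpha)%MM = 0%MM.
  by apply/mnmP => i; rewrite !mnmE maxnn subnn.
by rewrite mpolyX0 -!scalerAl !mul1r lcmm_divl // lcmm_divr.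
Qed.

Lemma spoly_combination s (G : 'I_s.+1 -> P) alpha q :
  (forall j, lm r (G j) = alpha) -> (forall j, (G j)@_alpha != 0) ->
  (\sum_j G j)@_alpha = 0 -> (forall j, q %| (G j)@_alpha) ->
  exists bs : 'I_s -> {poly K}, (forall j, bs j != 0) /\
    ((G ord_max)@_alpha %/ q) *: \sum_j G j =
    \sum_(j < s) bs j *: spoly r (G (widen_ord (leqnSn s) j)) (G ord_max).
Proof.
move=> lm_G c_neq0 sum_c0 dvd_q; set w := widen_ord (leqnSn s).
pose c j := (G j)@_alpha; pose b := c ord_max %/ q.
pose d j := c ord_max %/ gcdm (c (w j)) (c ord_max).
have dvd_db j : d j %| b by rewrite dvdp_divp2l ?dvdp_gcdmr ?dvdp_gcdm ?dvd_q.
have b_neq0 : b != 0 by rewrite /b dvdp_div_eq0 ?dvd_q //; apply: c_neq0.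
have sum_cs : \sum_(j < s) c (w j) = - c ord_max.
  by apply/eqP; rewrite -addr_eq0; move: sum_c0; rewrite raddf_sum big_ord_recr => ->.
have sum_ba : \sum_(j < s) b %/ d j * (c (w j) %/ gcdm (c (w j)) (c ord_max)) = - b.
  apply: (mulIf (c_neq0 ord_max)); rewrite mulr_suml.
  by rewrite (eq_bigr _ (fun j _ => divp_gcdm_cross (dvd_db j))) -mulr_sumr sum_cs mulrN mulNr.
exists (fun j => b %/ d j); split; first by move=> j; rewrite dvdp_div_eq0.
rewrite (eq_bigr (fun j => b *: G (w j)
           - (b %/ d j * (c (w j) %/ gcdm (c (w j)) (c ord_max))) *: G ord_max)).
  by rewrite sumrB -scaler_suml sum_ba scaleNr opprK -scaler_sumr -scalerDr big_ord_recr.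
by move=> j _; rewrite (spoly_same_lm (alpha := alpha)) // scalerBr !scalerA divpK.
Qed.

End SPolynomial.

Theorem lemma4p4 (K : fieldType) (m : nat) (r : rel 'X_{1..m})
  (s : nat) (F : 'I_s.+1 -> {mpoly {poly K}[m]}) (alpha : 'X_{1..m}) :
  monomial_order r ->
  (forall j, ~~ in_Kx1 (F j)) ->
  (forall j, lm r (F j) = alpha) ->
  (let f := \sum_(j < s.+1) F j in (f == 0) || mlt r (lm r f) alpha) ->
  (exists (b : {poly K}) (bs : 'I_s -> {poly K}),
      [/\ b != 0, (forall j, bs j != 0) &
          b *: (\sum_(j < s.+1) F j) =
          \sum_(j < s) bs j *: spoly r (F (widen_ord (leqnSn s) j)) (F ord_max)])
  /\
  (forall p : {poly K}, irreducible_poly p ->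
     exists (sigma : 'S_s.+1) (b : {poly K}) (bs : 'I_s -> {poly K}),
      [/\ b != 0, (forall j, bs j != 0), ~~ (p %| b) &
          b *: (\sum_(j < s.+1) F j) =
          \sum_(j < s) bs j *: spoly r (F (sigma (widen_ord (leqnSn s) j)))
                                        (F (sigma ord_max))]).
Proof.
move=> hr nonconst lm_F lm_sum_lt.
have c_neq0 j : (F j)@_alpha != 0.
  by rewrite -mcoeff_msupp -(lm_F j) lm_in_msupp.
have sum_c0 : (\sum_j F j)@_alpha = 0 by apply: mcoeff_eq0_lm_lt lm_sum_lt.
split.
  have [bs [bs_neq0 E]] := spoly_combination lm_F c_neq0 sum_c0 (fun j => dvd1p _).
  by exists (F ord_max)@_alpha, bs; rewrite -E divp1.
move=> p [p_gt1 _].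
have [e [k [dvd_e ndvd_k]]] :=
  exists_max_common_exp (c := fun j => (F j)@_alpha) p_gt1 (c_neq0 ord0).
pose sigma := tperm k ord_max.
have sum_sigma : \sum_j F (sigma j) = \sum_j F j.
  by rewrite [RHS](reindex_inj (@perm_inj _ sigma)).
have [bs [bs_neq0 E]] := spoly_combination (G := F \o sigma) (fun j => lm_F _)
  (fun j => c_neq0 _) (etrans (congr1 _ sum_sigma) sum_c0) (fun j => dvd_e _).
exists sigma, ((F k)@_alpha %/ p ^+ e), bs; split => //.
- by rewrite dvdp_div_eq0.
- apply: contra ndvd_k => dvd_p.
  by rewrite /= exprS -(divpK (dvd_e k)) dvdp_mul2r ?expf_neq0 // -size_poly_gt0 ltnW.
- by rewrite -sum_sigma -[k](tpermR k ord_max) E.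
Qed.
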